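(* For any circular interval graph $G$ and any vertex $v$ of $G$, $\deg_{G^2}(v)\le 4\omega(G)-4$.
   Context: A circular interval graph is obtained by taking a circle $\Sigma$, intervals $F_1,\dots,F_k\subseteq\Sigma$ each homeomorphic to $[0,1]$, a finite set of points of $\Sigma$ as vertex set, and joining two points iff both lie in some $F_i$. $G^2$ is the graph on $V(G)$ with distinct vertices adjacent iff at distance at most $2$ in $G$. $\omega$ is the clique number. *)

From HB Require Import structures.
From mathcomp Require Import all_boot all_order all_algebra.
Set Implicit Arguments. Unset Strict Implicit. Unset Printing Implicit Defensive.
Import Order.TTheory GRing.Theory Num.Theory.

(* The circle Sigma is modelled as [0,1) in an ordered field R, with 0 and 1 identified. *)
Definition on_circle (R : realFieldType) (x : R) : bool := ((0 <= x) && (x < 1))%R.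

(* A closed arc homeomorphic to [0,1]: starting point a in [0,1), going
   in the positive direction for length l with 0 < l < 1
   (l > 0: not a point; l < 1: not the whole circle). *)
Definition valid_arc (R : realFieldType) (f : R * R) : bool :=
  ((0 <= f.1) && (f.1 < 1) && (0 < f.2) && (f.2 < 1))%R.

(* membership of a circle point x in [0,1) in the arc f = (a, l):
   x is in [a, a+l] taken modulo 1. *)
Definition in_arc (R : realFieldType) (f : R * R) (x : R) : bool :=
  (((f.1 <= x) && (x <= f.1 + f.2)) || ((f.1 <= x + 1) && (x + 1 <= f.1 + f.2)))%R.

Definition cig_adj (R : realFieldType) (T : finType) (p : T -> R)
  (F : seq (R * R)) : rel T :=
  fun x y => (x != y) && has (fun f => in_arc f (p x) && in_arc f (p y)) F.

Definition sq_adj (T : finType) (e : rel T) : rel T :=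
  fun x y => (x != y) && (e x y || [exists w, e x w && e w y]).

Definition deg (T : finType) (e : rel T) (v : T) : nat := #|[set u | e v u]|.

Definition is_clique (T : finType) (e : rel T) (S : {set T}) : bool :=
  [forall x in S, forall y in S, (x != y) ==> e x y].

Definition omega (T : finType) (e : rel T) : nat :=
  \max_(S : {set T} | is_clique e S) #|S|.

(* Rotate the circle so that v sits at 0.  Among the arcs through 0 let A reach
   furthest clockwise, to [0, r], and B furthest counter-clockwise, to [s, 1);
   every neighbour of v lies in [0, r] or in [s, 1).  A vertex at distance two
   is then either a neighbour or lies on an arc avoiding 0 that meets one of
   these two sides.  On the [0, r] side all such arcs are covered by [0, r]
   together with the one C ending last, and [0, r] lies in the clique of A, so
   this side contains at most |A| + |C| - 1 <= 2 omega - 1 vertices, and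
   symmetrically for the [s, 1) side.  Both sides contain v, and v itself is
   not counted, whence 4 omega - 4. *)

From HB Require Import structures.
From mathcomp Require Import all_boot all_order all_algebra.
From mathcomp Require Import lra zify.
Import Order.TTheory GRing.Theory Num.Theory.
Set Implicit Arguments. Unset Strict Implicit. Unset Printing Implicit Defensive.
Local Open Scope ring_scope.

Section GraphFacts.
Variable T : finType.
Implicit Types (e : rel T) (S : {set T}).

Lemma eq_sq_adj e1 e2 : e1 =2 e2 -> sq_adj e1 =2 sq_adj e2.
Proof.
move=> e12 x y; rewrite /sq_adj e12; congr (_ && (_ || _)).
by apply: eq_existsb => w; rewrite !e12.
Qed.

Lemma eq_deg e1 e2 v : e1 =2 e2 -> deg e1 v = deg e2 v.
Proof. by move=> e12; apply: eq_card => u; rewrite !inE e12. Qed.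

Lemma eq_omega e1 e2 : e1 =2 e2 -> omega e1 = omega e2.
Proof.
move=> e12; apply: eq_bigl => S; apply: eq_forallb => x.
by congr (_ ==> _); apply: eq_forallb => y; rewrite e12.
Qed.

Lemma clique_card_le_omega e S : is_clique e S -> (#|S| <= omega e)%N.
Proof. exact: (@leq_bigmax_cond _ _ (fun S : {set T} => #|S|) S). Qed.

Lemma deg_sq_adj_isolated e v : (forall u, ~~ e v u) -> deg (sq_adj e) v = 0%N.
Proof.
move=> iso_v; apply: eq_card0 => u; rewrite !inE /sq_adj (negbTE (iso_v u)) /=.
by apply/negP => /andP[_ /existsP[w /andP[vw _]]]; move: vw; rewrite (negbTE (iso_v w)).
Qed.

Lemma card_setUD1_le S1 S2 (x : T) : x \in S1 -> x \in S2 ->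
  (#|(S1 :|: S2) :\ x| <= #|S1| + #|S2| - 2)%N.
Proof.
move=> x1 x2; have : (0 < #|S1 :&: S2|)%N by rewrite card_gt0; apply/set0Pn; exists x; rewrite inE x1 x2.
have := cardsUI S1 S2; have := cardsD1 x (S1 :|: S2); rewrite inE x1 /=.
lia.
Qed.

End GraphFacts.

Lemma seq_argmax (I : eqType) (d : Order.disp_t) (U : orderType d)
    (P : pred I) (key : I -> U) (s : seq I) :
  has P s -> exists x, [/\ x \in s, P x & forall y, y \in s -> P y -> (key y <= key x)%O].
Proof.
elim: s => //= a s IHs; have [Pa _|nPa /IHs[x [xs Px xmax]]] := boolP (P a); last first.
  exists x; split; rewrite ?inE ?xs ?orbT // => y; rewrite inE => /orP[/eqP->|/xmax//].
  by rewrite (negbTE nPa).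
have [/IHs[x [xs Px xmax]] | /hasPn noPs] := boolP (has P s); last first.
  exists a; split; rewrite ?inE ?eqxx // => y; rewrite inE => /orP[/eqP->//|ys].
  by rewrite (negbTE (noPs y ys)).
have [ax | /ltW xa] := leP (key a) (key x).
  by exists x; split; rewrite ?inE ?xs ?orbT // => y; rewrite inE => /orP[/eqP->//|/xmax].
exists a; split; rewrite ?inE ?eqxx // => y; rewrite inE => /orP[/eqP->//|ys /(xmax y ys) yx].
exact: le_trans yx xa.
Qed.

Ltac case_lra :=
  rewrite /=; repeat (match goal with
    | |- context [(?a <= ?b)%R] => case: (leP a b)
    | |- context [(?a < ?b)%R] => case: (ltP a b)
    end; rewrite /= => ?); rewrite /=; try done; try (exfalso; lra).

Section ArcGeometry.
Variable R : realFieldType.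
Implicit Types (f : R * R) (c x : R).

Definition rotate c x := if c <= x then x - c else x - c + 1.

Lemma on_circle_rotate c x : on_circle c -> on_circle x -> on_circle (rotate c x).
Proof.
rewrite /on_circle /rotate => /andP[? ?] /andP[? ?].
by case: (leP c x) => ?; apply/andP; split; lra.
Qed.

Lemma valid_arc_rotate c f : on_circle c -> valid_arc f -> valid_arc (rotate c f.1, f.2).
Proof.
move=> c_on /andP[/andP[/andP[a0 a1] l0] l1]; rewrite /valid_arc /= l0 l1 andbT.
by have /andP[-> ->] := on_circle_rotate c_on (introT andP (conj a0 a1)).
Qed.

Lemma in_arc_rotate c f x : on_circle c -> valid_arc f -> on_circle x ->
  in_arc f x = in_arc (rotate c f.1, f.2) (rotate c x).
Proof.
case: f => a l; rewrite /on_circle /valid_arc /in_arc /rotate /=.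
move=> /andP[? ?] /andP[/andP[/andP[? ?] ?] ?] /andP[? ?].
by case: (leP c a) => ?; case: (leP c x) => ?; case_lra.
Qed.

(* An arc through 0 meets [0, 1) in [0, reach_right f] and [reach_left f, 1);
   the second part is empty, by the convention reach_left f = 1, when the arc
   starts at 0. *)
Definition reach_right f := if f.1 == 0 then f.1 + f.2 else f.1 + f.2 - 1.
Definition reach_left f := if f.1 == 0 then 1 else f.1.

Lemma in_arc_through0 f x : valid_arc f -> on_circle x -> in_arc f 0 ->
  in_arc f x = (x <= reach_right f) || (reach_left f <= x).
Proof.
case: f => a l; rewrite /valid_arc /on_circle /in_arc /reach_right /reach_left /=.
move=> /andP[/andP[/andP[? ?] ?] ?] /andP[? ?].
by case: (a =P 0) => [->|?]; case_lra.
Qed.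

Lemma in_arc_avoiding0 f x : valid_arc f -> on_circle x -> ~~ in_arc f 0 ->
  in_arc f x = (f.1 <= x <= f.1 + f.2).
Proof.
case: f => a l; rewrite /valid_arc /on_circle /in_arc /=.
move=> /andP[/andP[/andP[? ?] ?] ?] /andP[? ?]; case_lra.
Qed.

End ArcGeometry.

Section Rooted.
Variables (R : realFieldType) (T : finType) (q : T -> R) (G : seq (R * R)) (v : T).
Hypotheses (q_v : q v = 0) (q_on : forall t, on_circle (q t)) (G_valid : all (@valid_arc R) G).

Let e := cig_adj q G.
Let K f := [set t | in_arc f (q t)].
Let meets (X : {set T}) f := X :&: K f != set0.
Let side (X : {set T}) :=
  [set u | (u \in X) || has (fun g => ~~ in_arc g 0 && meets X g && in_arc g (q u)) G].

Lemma card_arc_le_omega f : f \in G -> (#|K f| <= omega e)%N.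
Proof.
move=> fG; apply: clique_card_le_omega; apply/forallP => x; apply/implyP; rewrite inE => fx.
apply/forallP => y; apply/implyP; rewrite inE => fy; apply/implyP => xy.
by rewrite /e /cig_adj xy; apply/hasP; exists f; rewrite ?fx ?fy.
Qed.

Lemma card_side_le (X : {set T}) (key : R * R -> R) A0 :
  A0 \in G -> X \subset K A0 ->
  (forall g C, g \in G -> C \in G -> ~~ in_arc g 0 -> ~~ in_arc C 0 ->
     meets X g -> meets X C -> key g <= key C -> K g \subset X :|: K C) ->
  (#|side X| <= (2 * omega e).-1)%N.
Proof.
move=> A0G XA0 key_mono.
have cardX := leq_trans (subset_leq_card XA0) (card_arc_le_omega A0G).
pose P g := ~~ in_arc g 0 && meets X g.
have [/(seq_argmax key)[C [CG /andP[C0 XC] Cmax]] | /hasPn noP] := boolP (has P G); last first.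
  suff -> : side X = X by lia.
  apply/setP => u; rewrite inE; case: (u \in X) => //=.
  by apply/hasPn => g gG; move: (noP g gG); rewrite /P; case: (_ && _).
have sideC : side X \subset X :|: K C.
  apply/subsetP => u; rewrite inE => /orP[uX|/hasP[g gG /andP[/andP[g0 Xg] gu]]].
    by rewrite inE uX.
  have gC : K g \subset X :|: K C by apply: key_mono => //; apply: Cmax; rewrite // /P g0.
  by apply: (subsetP gC); rewrite inE.
have := subset_leq_card sideC; have := cardsUI X (K C); rewrite /meets -card_gt0 in XC.
have := card_arc_le_omega CG; lia.
Qed.

Lemma meets_setU1_origin (X : {set T}) g : ~~ in_arc g 0 -> meets (v |: X) g = meets X g.
Proof.
move=> g0; rewrite /meets setIUl; suff -> : [set v] :&: K g = set0 by rewrite set0U.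
by apply/setP => t; rewrite !inE; case: eqP => // ->; rewrite q_v (negbTE g0).
Qed.

Section Extremal.
Variables A B : R * R.
Hypotheses (A_G : A \in G) (A_0 : in_arc A 0) (B_G : B \in G) (B_0 : in_arc B 0).
Hypothesis A_max : forall f, f \in G -> in_arc f 0 -> reach_right f <= reach_right A.
Hypothesis B_min : forall f, f \in G -> in_arc f 0 -> reach_left B <= reach_left f.

(* v is added by hand: reach_left B is positive, so q v = 0 is not in the left band. *)
Let XR := v |: [set t | q t <= reach_right A].
Let XL := v |: [set t | reach_left B <= q t].

Lemma adj_origin_sides u : e v u -> (q u <= reach_right A) || (reach_left B <= q u).
Proof.
case/andP => _ /hasP[f fG /andP[f0 fu]]; rewrite q_v in f0.
have := A_max fG f0; have := B_min fG f0.
rewrite in_arc_through0 ?(allP G_valid f fG) // in fu.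
by case/orP: fu => ? ? ?; apply/orP; [left|right]; lra.
Qed.

Lemma card_side_right : (#|side XR| <= (2 * omega e).-1)%N.
Proof.
apply: (@card_side_le _ (fun f => f.1 + f.2) A) => //.
  apply/subsetP => t; rewrite !inE => /orP[/eqP->|]; first by rewrite q_v.
  by rewrite in_arc_through0 ?(allP G_valid A A_G) // => ->.
move=> g C gG CG g0 C0; rewrite !meets_setU1_origin //.
move=> /set0Pn[w /setIP[wX wg]] /set0Pn[w' /setIP[w'X w'C]] gC.
have vg := allP G_valid g gG; have vC := allP G_valid C CG.
apply/subsetP => u; rewrite !inE in wX w'X wg w'C *.
rewrite !(in_arc_avoiding0 _ (q_on _)) // in wg w'C *.
move: wg w'C => /andP[? ?] /andP[? ?] /andP[? ?].
case: (leP (q u) (reach_right A)) => ?; rewrite ?orbT //.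
by apply/orP; right; apply/andP; split; lra.
Qed.

Lemma card_side_left : (#|side XL| <= (2 * omega e).-1)%N.
Proof.
apply: (@card_side_le _ (fun f => - f.1) B) => //.
  apply/subsetP => t; rewrite !inE => /orP[/eqP->|]; first by rewrite q_v.
  by rewrite in_arc_through0 ?(allP G_valid B B_G) // => ->; rewrite orbT.
move=> g C gG CG g0 C0; rewrite !meets_setU1_origin //.
move=> /set0Pn[w /setIP[wX wg]] /set0Pn[w' /setIP[w'X w'C]] gC.
have vg := allP G_valid g gG; have vC := allP G_valid C CG.
apply/subsetP => u; rewrite !inE in wX w'X wg w'C *.
rewrite !(in_arc_avoiding0 _ (q_on _)) // in wg w'C *.
move: wg w'C => /andP[? ?] /andP[? ?] /andP[? ?].
case: (leP (reach_left B) (q u)) => ?; rewrite ?orbT //.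
by apply/orP; right; apply/andP; split; lra.
Qed.

Lemma sq_adj_origin_sub : [set u | sq_adj e v u] \subset (side XR :|: side XL) :\ v.
Proof.
have adj_sides u : e v u -> u \in side XR :|: side XL.
  by move/adj_origin_sides; rewrite !inE => /orP[->|->]; rewrite ?orbT.
apply/subsetP => u; rewrite inE in_setD1 => /andP[uv]; rewrite eq_sym uv /=.
case/orP=> [/adj_sides//|/existsP[w /andP[vw /andP[_ /hasP[g gG /andP[gw gu]]]]]].
have [g0|g0] := boolP (in_arc g 0).
  by apply: adj_sides; rewrite /e /cig_adj uv; apply/hasP; exists g; rewrite ?q_v ?g0.
have side_u (X : {set T}) : w \in X -> u \in side X.
  move=> wX; rewrite inE; apply/orP; right; apply/hasP; exists g; rewrite ?g0 ?gu //= andbT.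
  by apply/set0Pn; exists w; rewrite !inE wX.
have /orP[wR|wL] : (w \in XR) || (w \in XL).
  by rewrite !inE; case/orP: (adj_origin_sides vw) => ->; rewrite !orbT.
- by rewrite inE side_u.
- by rewrite inE (side_u XL) ?orbT.
Qed.

Lemma deg_sq_adj_origin_extremal : (deg (sq_adj e) v <= 4 * omega e - 4)%N.
Proof.
have vR : v \in side XR by rewrite !inE eqxx.
have vL : v \in side XL by rewrite !inE eqxx.
apply: leq_trans (subset_leq_card sq_adj_origin_sub) _.
have := card_setUD1_le vR vL; have := card_side_right; have := card_side_left.
lia.
Qed.

End Extremal.

Lemma deg_sq_adj_origin : (deg (sq_adj e) v <= 4 * omega e - 4)%N.
Proof.
have [has0 | /hasPn no0] := boolP (has (fun f => in_arc f 0) G); last first.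
  rewrite deg_sq_adj_isolated // => u; apply/nandP; right.
  by apply/hasPn => f fG; rewrite q_v (negbTE (no0 f fG)).
have [A [AG A0 A_max]] := seq_argmax (@reach_right R) has0.
have [B [BG B0 B_min]] := seq_argmax (fun f => - reach_left f) has0.
apply: (deg_sq_adj_origin_extremal AG A0 BG B0 A_max) => f fG f0.
by rewrite -lerN2; exact: B_min.
Qed.
End Rooted.

Theorem mainTheorem9 (R : realFieldType) (T : finType) (p : T -> R)
  (F : seq (R * R)) (v : T) :
  injective p ->
  (forall t, on_circle (p t)) ->
  all (@valid_arc R) F ->
  (deg (sq_adj (cig_adj p F)) v <= 4 * omega (cig_adj p F) - 4)%N.
Proof.
(* The placement need not be injective. *)
move=> _ p_on F_valid.
pose q t := rotate (p v) (p t).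
pose G := [seq (rotate (p v) f.1, f.2) | f <- F].
have rotate_adj : cig_adj p F =2 cig_adj q G.
  move=> x y; rewrite /cig_adj has_map; congr (_ && _); apply: eq_in_has => f fF /=.
  by rewrite -!in_arc_rotate ?(allP F_valid f fF).
rewrite (eq_deg v (eq_sq_adj rotate_adj)) (eq_omega rotate_adj).
apply: deg_sq_adj_origin => [|t|].
- by rewrite /q /rotate lexx subrr.
- exact: on_circle_rotate.
- by apply/allP => _ /mapP[f fF ->]; apply: valid_arc_rotate; rewrite ?(allP F_valid f fF).
Qed.
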